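(* Let $n\geq1$ and let $F:\mathbb{C}\to\mathbb{C}$ be additive. Then $F$ satisfies $$F(\alpha^{n+1})=\sum_{i=1}^{n}\binom{n+1}{i}(-1)^{n-i}\,\alpha^{n+1-i}\,F(\alpha^i)\quad\text{for all }\alpha\in\mathbb{C}$$ if and only if for all $x_1,\ldots,x_{n+1}\in\mathbb{C}$ $$F(x_1\cdots x_{n+1})=\sum_{k=1}^{n}(-1)^{k+1}\sum_{1\leq i_1<\cdots<i_k\leq n+1}x_{i_1}\cdots x_{i_k}\,F\big(x_1\cdots\widehat{x_{i_1}}\cdots\widehat{x_{i_k}}\cdots x_{n+1}\big),$$ where $\widehat{x_j}$ means that the factor $x_j$ is omitted. *)

From HB Require Import structures.
From mathcomp Require Export all_boot all_order all_algebra.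
From mathcomp Require Export complex.
From mathcomp Require Export Rstruct.
From Stdlib Require Rdefinitions.
Set Implicit Arguments.
Unset Strict Implicit.
Unset Printing Implicit Defensive.
Export Order.TTheory GRing.Theory Num.Theory.
Export ComplexField.

Notation CC := (complex Rdefinitions.R).

Definition additive_map (F : CC -> CC) : Prop :=
  forall x y : CC, F (x + y)%R = (F x + F y)%R.

(* For a scalar a and a map G, let (delta a G) z := G (a z) - a G z.  For a family x of
   scalars indexed by a finite set A, the composite of the delta (x i),
   i in A, applied to G and evaluated at w, expands by inclusion-exclusion to
     mixed_delta G x A w = \sum_(S <= A) (-1)^|S| (prod_S x) G (w prod_(A\S) x).
   Taking A = {1..n+1} and w = 1, this sum is exactly the difference between
   the two sides of the multilinear identity (up to a multiple of F 1), and
   for x constant equal to a it is the difference of the two sides of the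
   diagonal identity.

   The theorem thus follows from a polarisation principle: if
   (delta a)^m G w = 0 for all a, then every mixed composite of m operators
   delta (x i) kills G at w.  It is proved by induction on m, expanding
   (delta (a + t b))^(m+1) binomially as a polynomial in the natural number t
   and reading off its coefficient of degree 1 (a polynomial vanishing at all
   naturals is zero in characteristic 0). *)
From mathcomp Require Import ring.
Set Implicit Arguments.
Unset Strict Implicit.
Unset Printing Implicit Defensive.
Local Open Scope ring_scope.

Section SubsetSums.
Variables (T : finType) (V : zmodType).

Lemma sum_subsetU1 (i : T) (A : {set T}) (f : {set T} -> V) :
  i \notin A ->
  \sum_(S : {set T} | S \subset i |: A) f S =
  \sum_(S : {set T} | S \subset A) f S + \sum_(S : {set T} | S \subset A) f (i |: S).
Proof.
move=> iA; rewrite (bigID (fun S : {set T} => i \in S)) /= addrC; congr (_ + _).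
  apply: eq_bigl => S; apply/idP/idP.
    case/andP=> /subsetP sS iS; apply/subsetP=> y yS.
    have := sS y yS; rewrite in_setU1; case/orP=> // /eqP yi.
    by rewrite -yi yS in iS.
  move=> /subsetP sS; apply/andP; split.
    by apply/subsetP=> y yS; rewrite in_setU1 sS ?orbT.
  by apply/negP=> /sS; rewrite (negbTE iA).
rewrite (reindex_onto (fun S : {set T} => i |: S) (fun S => S :\ i)) /=.
  apply: eq_bigl => S; apply/idP/idP.
    case/andP=> /andP [/subsetP sS _] /eqP e; apply/subsetP=> y yS.
    have yi : y != i by apply/eqP=> yi; move: yS; rewrite -e yi !inE eqxx.
    by have := sS y; rewrite !inE (negbTE yi) yS orbT; apply.
  move=> /subsetP sS; rewrite setU11 andbT; apply/andP; split.
    by apply/subsetP=> y; rewrite !inE; case/orP=> [->//|/sS ->]; rewrite orbT.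
  apply/eqP/setP=> y; rewrite !inE; case: eqP => // ->.
  by apply/esym/negP=> /sS; rewrite (negbTE iA).
by move=> S /andP [_ iS]; rewrite setD1K.
Qed.

Lemma sum_by_card (g : {set T} -> V) :
  \sum_(S : {set T}) g S = \sum_(0 <= k < #|T|.+1) \sum_(S : {set T} | #|S| == k) g S.
Proof.
under [RHS]eq_bigr do rewrite big_mkcond.
rewrite exchange_big /=; apply: eq_bigr => S _.
rewrite -big_mkcond big_mkord (big_pred1 (inord #|S|)) //= => k.
rewrite eq_sym; apply/eqP/eqP => [<-|->]; first by rewrite inord_val.
by rewrite inordK // ltnS max_card.
Qed.

End SubsetSums.

Lemma coef_eq0_vanish_nat (R : numDomainType) m (c : nat -> R) :
  (forall t : nat, \sum_(0 <= k < m) c k * t%:R ^+ k = 0) ->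
  forall k, (k < m)%N -> c k = 0.
Proof.
move=> vanish; pose p := \poly_(k < m) c k.
have root_nat (t : nat) : root p t%:R.
  by apply/rootP; rewrite horner_poly -(big_mkord xpredT (fun k => c k * t%:R ^+ k)).
have p0 : p = 0.
  apply: contraTeq (size_poly m c) => pn0; rewrite -ltnNge.
  have := @max_poly_roots _ p [seq i%:R | i <- iota 0 m] pn0.
  rewrite size_map size_iota; apply.
    by apply/allP => r /mapP [i _ ->].
  by rewrite map_inj_uniq ?iota_uniq // => i j /eqP; rewrite eqr_nat => /eqP.
by move=> k km; have := coef_poly m c k; rewrite km -/p p0 coef0 => <-.
Qed.

Section DeltaOperator.
Variable R : comNzRingType.
Implicit Types (a b u v w z : R) (G : R -> R).

(* The twisted difference operator: how far G is from commuting with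
   multiplication by a. *)
Definition delta a G : R -> R := fun z => G (a * z) - a * G z.

Lemma additive_eq0 G : {morph G : x y / x + y} -> G 0 = 0.
Proof. by move=> hG; apply: (@addrI _ (G 0)); rewrite addr0 -hG addr0. Qed.

Lemma additive_natr G (t : nat) z : {morph G : x y / x + y} ->
  G (t%:R * z) = t%:R * G z.
Proof.
move=> hG; elim: t => [|t IH]; first by rewrite !mul0r additive_eq0.
by rewrite -addn1 !natrD !mulrDl !mul1r hG IH.
Qed.

Lemma delta_additive a G : {morph G : x y / x + y} -> {morph delta a G : x y / x + y}.
Proof. by move=> hG x y; rewrite /delta mulrDr !hG mulrDr addrACA opprD. Qed.

Lemma iter_delta_additive k a G :
  {morph G : x y / x + y} -> {morph iter k (delta a) G : x y / x + y}.
Proof. by move=> hG; elim: k => //= k IH; apply: delta_additive. Qed.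

Lemma iter_delta_ext k a G1 G2 : G1 =1 G2 -> iter k (delta a) G1 =1 iter k (delta a) G2.
Proof. by move=> e; elim: k => //= k IH z; rewrite /delta !IH. Qed.

Lemma delta1 G z : delta 1 G z = 0.
Proof. by rewrite /delta !mul1r subrr. Qed.

Lemma deltaDl a b G : {morph G : x y / x + y} ->
  delta (a + b) G =1 delta a G \+ delta b G.
Proof. by move=> hG z; rewrite /= /delta mulrDl hG mulrDl addrACA opprD. Qed.

Lemma delta_comm a b G z : delta a (delta b G) z = delta b (delta a G) z.
Proof. by rewrite /delta [b * (a * z)]mulrCA; ring. Qed.

Lemma iter_deltaD k a G1 G2 z :
  iter k (delta a) (G1 \+ G2) z = iter k (delta a) G1 z + iter k (delta a) G2 z.
Proof. by elim: k z => //= k IH z; rewrite /delta !IH; ring. Qed.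

Lemma iter_delta_comm k a b G z :
  iter k (delta a) (delta b G) z = delta b (iter k (delta a) G) z.
Proof.
elim: k z => //= k IH z.
by rewrite [RHS]delta_comm /delta !IH.
Qed.

Lemma iter_delta_natr k (t : nat) b G z : {morph G : x y / x + y} ->
  iter k (delta (t%:R * b)) G z = t%:R ^+ k * iter k (delta b) G z.
Proof.
move=> hG; elim: k z => [|k IH] z /=; first by rewrite mul1r.
have hH := iter_delta_additive k (t%:R * b) hG.
rewrite /delta -!mulrA (additive_natr _ _ hH) !IH exprS; ring.
Qed.

Lemma iter_delta_binomial m u v G z : {morph G : x y / x + y} ->
  iter m (delta (u + v)) G z =
  \sum_(0 <= k < m.+1) 'C(m, k)%:R * iter k (delta v) (iter (m - k) (delta u) G) z.
Proof.
elim: m G z => [|m IH] G z hG; first by rewrite big_nat1 /= mul1r.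
rewrite iterSr IH; last exact: delta_additive.
have step k : iter k (delta v) (iter (m - k) (delta u) (delta (u + v) G)) z =
   iter k (delta v) (iter (m - k).+1 (delta u) G) z +
   iter k.+1 (delta v) (iter (m - k) (delta u) G) z.
  have split_uv : iter (m - k) (delta u) (delta (u + v) G) =1
      iter (m - k).+1 (delta u) G \+ delta v (iter (m - k) (delta u) G).
    move=> w; rewrite (iter_delta_ext _ _ (deltaDl u v hG)).
    by rewrite (iter_deltaD _ _ (delta u G)) /= -iterSr iter_delta_comm.
  by rewrite (iter_delta_ext k v split_uv z) iter_deltaD -iterSr.
under eq_bigr => k _ do rewrite step mulrDr.
rewrite big_split /= [in RHS]big_nat_recl // bin0 mul1r subn0.
under [in RHS]eq_bigr => k _ do rewrite subSS binS natrD mulrDl.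
rewrite [in RHS]big_split /= addrA; congr (_ + _).
rewrite big_nat_recl // bin0 mul1r subn0 [in RHS]big_nat_recr //= bin_small // mul0r addr0.
congr (_ + _); apply: eq_big_nat => k /andP [_ km].
by rewrite -(subnSK km).
Qed.

End DeltaOperator.

(* The composite of the operators delta (x i), i in A, written in closed form
   by inclusion-exclusion. *)
Section MixedDelta.
Variables (R : comNzRingType) (T : finType).
Implicit Types (a b w : R) (G : R -> R) (x : T -> R) (A : {set T}).

Definition mixed_delta G x A w : R :=
  \sum_(S : {set T} | S \subset A)
    (-1) ^+ #|S| * (\prod_(j in S) x j) * G (w * \prod_(j in A :\: S) x j).

Lemma mixed_delta_set0 G x w : mixed_delta G x set0 w = G w.
Proof.
rewrite /mixed_delta (big_pred1 set0) => [|S]; last by rewrite subset0.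
by rewrite cards0 expr0 setD0 !big_set0 !mul1r mulr1.
Qed.

Lemma mixed_deltaU1 G x A i w : i \notin A ->
  mixed_delta G x (i |: A) w = delta (x i) (mixed_delta G x A) w.
Proof.
move=> iA; rewrite /mixed_delta /delta sum_subsetU1 // mulr_sumr -sumrN.
congr (_ + _); apply: eq_bigr => S sA.
  have iS : i \notin S by apply/negP=> /(subsetP sA); rewrite (negbTE iA).
  have -> : (i |: A) :\: S = i |: (A :\: S).
    by apply/setP=> y; rewrite !inE; case: eqP => // ->; rewrite iS.
  rewrite big_setU1 /=; last by rewrite !inE negb_and iA orbT.
  by rewrite mulrCA mulrA.
have iS : i \notin S by apply/negP=> /(subsetP sA); rewrite (negbTE iA).
have -> : (i |: A) :\: (i |: S) = A :\: S.
  by apply/setP=> y; rewrite !inE; case: eqP => // ->; rewrite (negbTE iA) andbF.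
by rewrite cardsU1 iS big_setU1 //= exprS; ring.
Qed.

Lemma mixed_delta_pick G x A m w : #|A| = m.+1 ->
  exists2 i, #|A :\ i| = m &
    mixed_delta G x A w = delta (x i) (mixed_delta G x (A :\ i)) w.
Proof.
move=> cardA; have /card_gt0P [i iA] : (0 < #|A|)%N by rewrite cardA.
exists i; first by move: cardA; rewrite (cardsD1 i A) iA add1n => -[].
by rewrite -mixed_deltaU1 ?setD1K // !inE eqxx.
Qed.

Lemma mixed_delta_delta G x A b w :
  mixed_delta (delta b G) x A w = delta b (mixed_delta G x A) w.
Proof.
rewrite /mixed_delta /delta mulr_sumr -sumrB; apply: eq_bigr => S _.
by rewrite mulrA; ring.
Qed.

Lemma mixed_delta_const G a m A w : #|A| = m ->
  mixed_delta G (fun _ => a) A w = iter m (delta a) G w.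
Proof.
elim: m A w => [|m IH] A w cardA.
  by move/eqP: cardA; rewrite cards_eq0 => /eqP ->; rewrite mixed_delta_set0.
have [i cardAi ->] := mixed_delta_pick G (fun _ => a) w cardA.
by rewrite /delta !IH.
Qed.

End MixedDelta.

Section Polarisation.
Variable R : numDomainType.
Implicit Types (a b w : R) (G : R -> R).

(* The degree-one coefficient of t |-> (delta (a + t b))^(m+1) G w, which
   vanishes identically, is (m+1) (delta a)^m (delta b) G w. *)
Lemma iter_delta_first_coef m a b G w : {morph G : x y / x + y} ->
  (forall c, iter m.+1 (delta c) G w = 0) -> iter m (delta a) (delta b G) w = 0.
Proof.
move=> hG vanish.
pose c k := 'C(m.+1, k)%:R * iter k (delta b) (iter (m.+1 - k) (delta a) G) w.
have poly_vanish (t : nat) : \sum_(0 <= k < m.+2) c k * t%:R ^+ k = 0.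
  rewrite -[RHS](vanish (a + t%:R * b)) iter_delta_binomial //.
  apply: eq_bigr => k _; rewrite /c iter_delta_natr; last exact: iter_delta_additive.
  by rewrite -!mulrA [_ ^+ k * _]mulrC.
have /eqP := coef_eq0_vanish_nat poly_vanish (isT : (1 < m.+2)%N).
by rewrite /c bin1 subSS subn0 mulf_eq0 pnatr_eq0 /= iter_delta_comm => /eqP.
Qed.

Lemma polarisation (T : finType) (x : T -> R) m G w : {morph G : x y / x + y} ->
  (forall a, iter m (delta a) G w = 0) ->
  forall A : {set T}, #|A| = m -> mixed_delta G x A w = 0.
Proof.
elim: m G => [|m IH] G hG vanish A cardA.
  by move/eqP: cardA; rewrite cards_eq0 => /eqP ->; rewrite mixed_delta_set0; apply: vanish 0.
have [i cardAi ->] := mixed_delta_pick G x w cardA.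
rewrite -mixed_delta_delta IH //; first exact: delta_additive.
by move=> a; apply: iter_delta_first_coef.
Qed.

End Polarisation.

Section Identities.
Variables (R : comNzRingType) (n : nat) (F : R -> R).

Lemma mixed_delta_setT (x : 'I_n.+1 -> R) :
  mixed_delta F x setT 1 =
  F (\prod_(j < n.+1) x j) -
  \sum_(1 <= k < n.+1)
        (-1) ^+ k.+1 *
        \sum_(S : {set 'I_n.+1} | #|S| == k)
          (\prod_(j in S) x j) * F (\prod_(j in ~: S) x j)
  + (-1) ^+ n.+1 * (\prod_(j < n.+1) x j) * F 1.
Proof.
rewrite /mixed_delta.
under eq_bigl => S do rewrite subsetT.
under eq_bigr => S _ do rewrite setTD mul1r.
rewrite sum_by_card card_ord big_ltn // big_nat_recr //=.
rewrite (big_pred1 set0); last by move=> S; rewrite cards_eq0.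
rewrite (big_pred1 setT); last first.
  move=> S; apply/eqP/eqP => [cardS|->]; last by rewrite cardsT card_ord.
  by apply/eqP; rewrite eqEcard subsetT cardsT card_ord cardS leqnn.
rewrite cards0 expr0 mul1r big_set0 mul1r setC0 cardsT card_ord setCT big_set0.
rewrite !big_set -addrA; congr (_ + _).
rewrite -[in RHS]sumrN; congr (_ + _); apply: eq_bigr => k _.
rewrite mulr_sumr -sumrN; apply: eq_bigr => S /eqP ->.
by rewrite exprS mulN1r mulNr opprK mulrA.
Qed.

(* For a constant family, the right-hand side of the multilinear identity
   collapses to that of the diagonal identity: there are C(n+1, k) subsets of
   size k, and k is renamed n+1-i. *)
Lemma multilinear_rhs_const (a : R) :
  \sum_(1 <= k < n.+1)
        (-1) ^+ k.+1 *
        \sum_(S : {set 'I_n.+1} | #|S| == k)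
          (\prod_(j in S) (fun _ => a) j) * F (\prod_(j in ~: S) (fun _ => a) j)
  = \sum_(1 <= i < n.+1)
        ('C(n.+1, i))%:R * (-1) ^+ (n - i) * a ^+ (n.+1 - i) * F (a ^+ i).
Proof.
rewrite [in RHS]big_nat_rev /=; apply: eq_big_nat => k /andP [k1 kn].
have count_subsets : \sum_(S : {set 'I_n.+1} | #|S| == k)
          (\prod_(j in S) (fun _ => a) j) * F (\prod_(j in ~: S) (fun _ => a) j)
        = (a ^+ k * F (a ^+ (n.+1 - k))) *+ 'C(n.+1, k).
  rewrite -[in RHS](card_ord n.+1) -card_draws cardsE -sumr_const.
  by apply: eq_bigr => S /eqP cardS; rewrite !prodr_const -(cardsC S) cardS addKn.
rewrite count_subsets add1n subSS; case: k k1 kn {count_subsets} => // k _ kn.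
have kn' : (k <= n)%N by apply: ltnW.
rewrite bin_sub // subSS subKn // subSn ?leq_subr // subKn //.
by rewrite -mulr_natl !exprS !mulN1r opprK; ring.
Qed.

Lemma iter_delta_diagonal (a : R) :
  iter n.+1 (delta a) F 1 =
  F (a ^+ n.+1) -
  \sum_(1 <= i < n.+1)
        ('C(n.+1, i))%:R * (-1) ^+ (n - i) * a ^+ (n.+1 - i) * F (a ^+ i)
  + (-1) ^+ n.+1 * a ^+ n.+1 * F 1.
Proof.
have cardT : #|[set: 'I_n.+1]| = n.+1 by rewrite cardsT card_ord.
by rewrite -(mixed_delta_const F a 1 cardT) mixed_delta_setT multilinear_rhs_const
  prodr_const card_ord.
Qed.

End Identities.

Theorem mainTheorem8 (n : nat) (hn : (1 <= n)%N) (F : CC -> CC)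
    (hF : additive_map F) :
  (forall a : CC,
      F (a ^+ n.+1) =
      \sum_(1 <= i < n.+1)
        ('C(n.+1, i))%:R * (-1) ^+ (n - i) * a ^+ (n.+1 - i) * F (a ^+ i))
  <->
  (forall x : 'I_n.+1 -> CC,
      F (\prod_(j < n.+1) x j) =
      \sum_(1 <= k < n.+1)
        (-1) ^+ k.+1 *
        \sum_(S : {set 'I_n.+1} | #|S| == k)
          (\prod_(j in S) x j) * F (\prod_(j in ~: S) x j)).
Proof.
split=> [diagonal x | multilinear a]; last first.
  by have := multilinear (fun _ => a); rewrite prodr_const card_ord multilinear_rhs_const.
have iter_delta_F a : iter n.+1 (delta a) F 1 = (-1) ^+ n.+1 * a ^+ n.+1 * F 1.
  by rewrite iter_delta_diagonal -diagonal subrr add0r.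
(* At a = 1 the left side vanishes, so F 1 = 0 ... *)
have F1 : F 1 = 0.
  have /esym/eqP := iter_delta_F 1.
  by rewrite iterS delta1 expr1n mulr1 mulf_eq0 signr_eq0 => /eqP.
(* ... hence (delta a)^(n+1) F 1 = 0 for all a, and polarisation applies. *)
have vanish a : iter n.+1 (delta a) F 1 = 0 by rewrite iter_delta_F F1 mulr0.
have cardT : #|[set: 'I_n.+1]| = n.+1 by rewrite cardsT card_ord.
have := polarisation x hF vanish cardT.
by rewrite mixed_delta_setT F1 mulr0 addr0 => /eqP; rewrite subr_eq0 => /eqP.
Qed.
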